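(* Let $x_1,x_2,x_3,x_4\in\mathbb{Z}^3$ be the vertices of a Fano tetrahedron, and let $\lambda_1,\ldots,\lambda_4$ be non-negative integers with $\gcd(\lambda_1,\ldots,\lambda_4)=1$ such that, with $h=\lambda_1+\cdots+\lambda_4$, the numbers $\lambda_i/h$ are the barycentric coordinates of the origin with respect to $x_1,\ldots,x_4$ (i.e. $\sum_i\lambda_ix_i=0$). Then (i) $\sum_{i=1}^4\left\{\frac{\kappa\lambda_i}{h}\right\}=2$ for all integers $\kappa\in\{2,\ldots,h-2\}$, and (ii) $\gcd(\lambda_i,\lambda_j)=1$ for all $i\neq j$.
   Context: A tetrahedron is called Fano if its vertices lie in $\mathbb{Z}^3$ and the only lattice point it contains other than its vertices is the origin, which lies strictly in its interior. $\{q\}=q-\lfloor q\rfloor$ denotes the fractional part of $q\in\mathbb{Q}$. *)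

From HB Require Import structures.
From mathcomp Require Import all_boot all_order all_algebra.
Set Implicit Arguments. Unset Strict Implicit. Unset Printing Implicit Defensive.
Import Order.TTheory GRing.Theory Num.Theory.
Local Open Scope ring_scope.

Definition toQ (p : 'rV[int]_3) : 'rV[rat]_3 := map_mx (fun z : int => z%:~R) p.

Definition in_tetra (x : 'I_4 -> 'rV[rat]_3) (p : 'rV[rat]_3) : Prop :=
  exists mu : 'I_4 -> rat,
    (forall i, 0 <= mu i) /\ \sum_i mu i = 1 /\ \sum_i mu i *: x i = p.

Definition in_interior (x : 'I_4 -> 'rV[rat]_3) (p : 'rV[rat]_3) : Prop :=
  exists mu : 'I_4 -> rat,
    (forall i, 0 < mu i) /\ \sum_i mu i = 1 /\ \sum_i mu i *: x i = p.

Definition aff_indep (x : 'I_4 -> 'rV[rat]_3) : Prop :=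
  forall mu : 'I_4 -> rat,
    \sum_i mu i = 0 -> \sum_i mu i *: x i = 0 -> forall i, mu i = 0.

Definition fano (x : 'I_4 -> 'rV[int]_3) : Prop :=
  aff_indep (fun i => toQ (x i)) /\
  in_interior (fun i => toQ (x i)) 0 /\
  (forall p : 'rV[int]_3, in_tetra (fun i => toQ (x i)) (toQ p) ->
     p = 0 \/ exists i, p = x i).

Definition fracpart (q : rat) : rat := q - (Num.floor q)%:~R.

From mathcomp Require Import all_boot all_order all_algebra.
From mathcomp Require Import zify.
Set Implicit Arguments.
Unset Strict Implicit.
Unset Printing Implicit Defensive.
Import Order.TTheory GRing.Theory Num.Theory.
Local Open Scope ring_scope.

(** For [k] in [1, h - 1] let [r_i = k lambda_i mod h].  As [sum_i lambda_i x_i = 0],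
    the lattice point [P = - sum_i (k lambda_i div h) x_i] satisfies
    [h P = sum_i r_i x_i], and [sum_i r_i = h * sum_i {k lambda_i / h}] is a
    multiple of [h]; it is nonzero because the [lambda_i] are coprime.  For
    [2 <= k <= h - 2] it is not [h]: otherwise [P] would be a lattice point of the
    tetrahedron with barycentric coordinates [r_i / h], hence a vertex (impossible,
    as [r_i < h]) or the origin, forcing [r_i = lambda_i] and [h | k - 1].  It is
    not [3h] either, since [r_i(k) + r_i(h - k) <= h] would then make the sum for
    [h - k] equal to [h].  So it is [2h], which is (i).
    For (ii), if [d >= 2] divides [lambda_i] and [lambda_j], both
    [k lambda_i div h] and [k lambda_j div h] increase from [k = q] to [k = q + 1],
    where [q = (h - 1) div d]; the residue sum then drops by at least [h], which
    (i) and the bound [h] at [k = 1] forbid. *)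

Lemma fracpart_natdiv (n m : nat) :
  (0 < m)%N -> fracpart (n%:R / m%:R) = (n %% m)%:R / m%:R.
Proof.
move=> m_gt0; have m_neq0 : (m%:R : rat) != 0 by rewrite pnatr_eq0 -lt0n.
rewrite /fracpart {1 2}(divn_eq n m) natrD natrM mulrDl mulfK //.
rewrite real_floorDzr ?rpred_nat ?num_real //=.
have -> : Num.floor ((n %% m)%:R / m%:R : rat) = 0.
  apply: floor_def; rewrite add0r /= mulr0z mulr1z divr_ge0 ?ler0n //=.
  by rewrite ltr_pdivrMr ?ltr0n // mul1r ltr_nat ltn_pmod.
by rewrite (intrKfloor (Posz (n %/ m))) addr0 pmulrn addrC addKr.
Qed.

Lemma modn_compl_le m k l : (k <= m)%N -> (k * l %% m + (m - k) * l %% m <= m)%N.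
Proof.
case: (posnP m) => [-> | m_gt0 k_le]; first by rewrite leqn0 => /eqP ->.
have : (m %| k * l %% m + (m - k) * l %% m)%N.
  by rewrite /dvdn modnDm -mulnDl subnKC // modnMr.
case/dvdnP=> t sum_eq; rewrite sum_eq -[X in (_ <= X)%N]mul1n leq_pmul2r //.
have : (t * m < 2 * m)%N.
  by rewrite -sum_eq mul2n -addnn -addSn leq_add ?ltn_pmod // ltnW ?ltn_pmod.
by rewrite ltn_pmul2r.
Qed.

Lemma divn_mul_jump m d l q : (0 < l)%N -> (d %| l)%N -> (q * d < m <= q.+1 * d)%N ->
  (q * l %/ m < q.+1 * l %/ m)%N.
Proof.
move=> l_gt0 d_dvd /andP[qd_lt m_le].
have m_gt0 : (0 < m)%N by apply: leq_ltn_trans qd_lt.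
have d_gt0 : (0 < d)%N := dvdn_gt0 l_gt0 d_dvd.
have a_gt0 : (0 < l %/ d)%N by rewrite divn_gt0 // dvdn_leq.
rewrite -(divnK d_dvd); apply: (@leq_trans (l %/ d)).
  by rewrite ltn_divLR // mulnCA ltn_pmul2l.
by rewrite leq_divRL // mulnCA leq_pmul2l.
Qed.

Section ResidueSums.
Local Open Scope nat_scope.

Variables (I : finType) (lam : I -> nat).
Local Notation h := (\sum_i lam i).

(* [resid_sum k] is [h] times the sum of the fractional parts [{k lam_i / h}]. *)
Definition resid_sum k := \sum_i (k * lam i %% h).
Definition quot_sum k := \sum_i (k * lam i %/ h).

Lemma quot_resid_sum k : quot_sum k * h + resid_sum k = k * h.
Proof.
rewrite /quot_sum /resid_sum big_distrl -big_split [in RHS]big_distrr /=.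
by apply: eq_bigr => i _; rewrite -divn_eq.
Qed.

Lemma resid_sum_eq k : resid_sum k = (k - quot_sum k) * h.
Proof. by rewrite mulnBl -quot_resid_sum addKn. Qed.

Lemma dvdn_resid_sum k : h %| resid_sum k.
Proof. by rewrite resid_sum_eq dvdn_mull. Qed.

Lemma resid_sum_le_mul k : resid_sum k <= k * h.
Proof. by rewrite -quot_resid_sum leq_addl. Qed.

Lemma resid_sum_drop q :
  quot_sum q + 2 <= quot_sum q.+1 -> resid_sum q.+1 + h <= resid_sum q.
Proof.
move=> jump; have := quot_resid_sum q; have := quot_resid_sum q.+1.
have : (quot_sum q + 2) * h <= quot_sum q.+1 * h by rewrite leq_mul2r jump orbT.
rewrite mulSn !mulnDl.
move: (quot_sum q * h) (quot_sum q.+1 * h) (q * h) => a b c; lia.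
Qed.

Lemma quot_sum_jump2 q i j : i != j ->
    q * lam i %/ h < q.+1 * lam i %/ h -> q * lam j %/ h < q.+1 * lam j %/ h ->
  quot_sum q + 2 <= quot_sum q.+1.
Proof.
rewrite /quot_sum; move: h => m ij jump_i jump_j.
rewrite (bigD1 i) // [X in _ <= X](bigD1 i) //= (bigD1 j) 1?eq_sym //.
rewrite [X in _ <= _ + X](bigD1 j) 1?eq_sym //=.
have rest : \sum_(l | (l != i) && (l != j)) (q * lam l %/ m)
            <= \sum_(l | (l != i) && (l != j)) (q.+1 * lam l %/ m).
  by apply: leq_sum => l _; rewrite leq_div2r // leq_mul2r leqnSn orbT.
by rewrite addn2 -addnS -!addSn (leq_add jump_i (leq_add jump_j rest)).
Qed.

Lemma sum_pair_le i j : i != j -> lam i + lam j <= h.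
Proof. by move=> ij; rewrite (bigD1 i) //= (bigD1 j) 1?eq_sym //= addnA leq_addr. Qed.

Lemma card_le_sum : (forall i, 0 < lam i) -> #|I| <= h.
Proof. by move=> lam_gt0; rewrite -sum1_card; apply: leq_sum. Qed.

Lemma resid_sum_compl_le k : k <= h -> resid_sum k + resid_sum (h - k) <= #|I| * h.
Proof.
move=> k_le; rewrite /resid_sum -big_split -sum_nat_const.
by apply: leq_sum => i _; apply: modn_compl_le.
Qed.

Lemma dvdn_biggcd1 m c :
  \big[gcdn/0]_i lam i = 1 -> (forall i, m %| c * lam i) -> m %| c.
Proof.
move=> gcd1 m_dvd; rewrite -[c]muln1 -gcd1.
by rewrite (big_morph (muln c) (muln_gcdr c) (muln0 c)); apply/dvdn_biggcdP.
Qed.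

Lemma sum_gt0_biggcd1 : \big[gcdn/0]_i lam i = 1 -> 0 < h.
Proof.
move=> gcd1; rewrite lt0n; apply: contra_eq_neq gcd1 => /eqP.
by rewrite sum_nat_eq0 => /forallP lam0; rewrite big1 // => i _; apply/eqP/lam0.
Qed.

Lemma resid_sum_eq0 k : \big[gcdn/0]_i lam i = 1 -> resid_sum k = 0 -> h %| k.
Proof.
move=> gcd1 /eqP; rewrite sum_nat_eq0 => /forallP resid0.
by apply: dvdn_biggcd1 => // i; apply: resid0.
Qed.

End ResidueSums.

Lemma toQ_natZ (n : nat) (v : 'rV[int]_3) : toQ (n%:Z *: v) = n%:R *: toQ v.
Proof. by rewrite /toQ map_mxZ. Qed.

Lemma toQ_nat_comb (I : finType) (a : I -> nat) (v : I -> 'rV[int]_3) :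
  toQ (\sum_i (a i)%:Z *: v i) = \sum_i (a i)%:R *: toQ (v i).
Proof. by rewrite /toQ map_mx_sum; apply: eq_bigr => i _; rewrite map_mxZ. Qed.

Lemma aff_indep_nat_comb_inj (x : 'I_4 -> 'rV[int]_3) (a b : 'I_4 -> nat) :
    aff_indep (fun i => toQ (x i)) -> (\sum_i a i = \sum_i b i)%N ->
    \sum_i (a i)%:Z *: x i = \sum_i (b i)%:Z *: x i ->
  a =1 b.
Proof.
move=> indep sum_ab comb_ab i; apply/eqP; rewrite -(eqr_nat rat) -subr_eq0.
apply/eqP; move: i; apply: indep.
  by rewrite sumrB -!natr_sum sum_ab subrr.
rewrite (eq_bigr _ (fun i _ => scalerBl _ _ _)) sumrB.
by rewrite -!toQ_nat_comb comb_ab subrr.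
Qed.

Section FanoTetrahedron.

Variables (x : 'I_4 -> 'rV[int]_3) (lam : 'I_4 -> nat).
Hypotheses (x_fano : fano x) (lam_gcd1 : \big[gcdn/0%N]_(i < 4) lam i = 1%N)
  (lam_bary : \sum_(i < 4) (lam i)%:Z *: x i = 0).
Local Notation h := (\sum_i lam i)%N.

Let h_gt0 : (0 < h)%N := sum_gt0_biggcd1 lam_gcd1.

Lemma fano_lam_gt0 i : (0 < lam i)%N.
Proof.
have [indep [[mu [mu_gt0 [mu_sum mu_bary]]] _]] := x_fano.
rewrite -(ltr0n rat); suff -> : (lam i)%:R = h%:R * mu i :> rat.
  by rewrite mulr_gt0 ?ltr0n ?mu_gt0.
apply/eqP; rewrite -subr_eq0; apply/eqP; move: i; apply: indep.
  by rewrite sumrB -mulr_sumr mu_sum mulr1 -natr_sum subrr.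
rewrite (eq_bigr _ (fun i _ => scalerBl _ _ _)) sumrB -toQ_nat_comb lam_bary.
rewrite (eq_bigr _ (fun i _ => esym (scalerA _ _ _))) -scaler_sumr mu_bary.
by rewrite scaler0 /toQ map_mx0 subrr.
Qed.

Lemma resid_comb_scale k :
  h%:Z *: (- \sum_i (k * lam i %/ h)%:Z *: x i) = \sum_i (k * lam i %% h)%:Z *: x i.
Proof.
have k_bary : \sum_i (k * lam i)%:Z *: x i = 0.
  rewrite (eq_bigr (fun i => k%:Z *: ((lam i)%:Z *: x i))) => [|i _].
    by rewrite -scaler_sumr lam_bary scaler0.
  by rewrite scalerA PoszM.
rewrite scalerN scaler_sumr -[LHS]sub0r -[X in X - _]k_bary -sumrB.
apply: eq_bigr => i _.
rewrite scalerA -scalerBl {1}(divn_eq (k * lam i) h) PoszD PoszM.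
by rewrite [h%:Z * _]mulrC addrAC subrr add0r.
Qed.

Lemma fano_bary_eq_lam (r : 'I_4 -> nat) (P : 'rV[int]_3) :
    (forall i, r i < h)%N -> (\sum_i r i = h)%N ->
    h%:Z *: P = \sum_i (r i)%:Z *: x i ->
  r =1 lam.
Proof.
move=> r_lt r_sum hP; have [indep [_ lattice]] := x_fano.
have h_neq0 : (h%:R : rat) != 0 by rewrite pnatr_eq0 -lt0n h_gt0.
have P_in : in_tetra (fun i => toQ (x i)) (toQ P).
  exists (fun i => (r i)%:R / h%:R); split; [|split].
  - by move=> i; rewrite divr_ge0 ?ler0n.
  - by rewrite -mulr_suml -natr_sum r_sum mulfV.
  - apply: (scalerI h_neq0); rewrite -toQ_natZ hP toQ_nat_comb scaler_sumr.
    by apply: eq_bigr => i _; rewrite scalerA mulrC mulfVK.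
case: (lattice P P_in) => [P0 | [j Pj]].
  by apply: (aff_indep_nat_comb_inj indep) => //; rewrite lam_bary -hP P0 scaler0.
have : r =1 (fun i => if i == j then h else 0%N).
  apply: (aff_indep_nat_comb_inj indep) => //; first by rewrite -big_mkcond big_pred1_eq.
  rewrite -hP Pj (eq_bigr (fun i => if i == j then h%:Z *: x i else 0)) => [|i _].
    by rewrite -big_mkcond big_pred1_eq.
  by case: eqP; rewrite ?scale0r.
by move=> /(_ j); rewrite eqxx => r_j; have := r_lt j; rewrite r_j ltnn.
Qed.

Lemma fano_resid_sum_neq_h k : (2 <= k <= h - 2)%N -> resid_sum lam k != h.
Proof.
case/andP=> k_ge2 k_le; apply/eqP => resid_h.
have resid_lam := fano_bary_eq_lam (fun i => ltn_pmod _ h_gt0) resid_h (resid_comb_scale k).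
have : (h %| k - 1)%N.
  apply: (dvdn_biggcd1 lam_gcd1) => i.
  rewrite mulnBl mul1n -eqn_mod_dvd ?leq_pmull //; last by apply: leq_trans k_ge2.
  by rewrite -{2}(resid_lam i) /= modn_mod.
have k1_gt0 : (0 < k - 1)%N by lia.
by move/(dvdn_leq k1_gt0); lia.
Qed.

Lemma fano_resid_sum_mid k : (2 <= k <= h - 2)%N -> resid_sum lam k = (2 * h)%N.
Proof.
move=> k_mid; have /andP[k_ge2 k_le] := k_mid.
have resid_gt0 m : (0 < m < h)%N -> (0 < resid_sum lam m)%N.
  case/andP=> m_gt0 m_lt; rewrite lt0n; apply/eqP => /(resid_sum_eq0 lam_gcd1).
  by move/(dvdn_leq m_gt0); rewrite leqNgt m_lt.
have R_gt0 : (0 < resid_sum lam k)%N by apply: resid_gt0; lia.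
have R_neq := fano_resid_sum_neq_h k_mid.
have R'_ge : (h <= resid_sum lam (h - k))%N.
  by apply: dvdn_leq (dvdn_resid_sum _ _); apply: resid_gt0; lia.
have R'_neq : resid_sum lam (h - k) != h by apply: fano_resid_sum_neq_h; lia.
have := resid_sum_compl_le (leq_trans k_le (leq_subr 2 h)); rewrite card_ord.
move: R_gt0 R_neq; have [t ->] := dvdnP (dvdn_resid_sum lam k).
case: t => [|[|[|t]]] //; rewrite ?mul1n ?eqxx // !mulSn; lia.
Qed.

Lemma fano_coprime i j : i != j -> coprime (lam i) (lam j).
Proof.
move=> ij; rewrite /coprime; set d := gcdn _ _.
have d_gt0 : (0 < d)%N by rewrite gcdn_gt0 fano_lam_gt0.
rewrite eqn_leq d_gt0 andbT leqNgt; apply/negP => d_gt1.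
have d_le_i : (d <= lam i)%N := dvdn_leq (fano_lam_gt0 i) (dvdn_gcdl _ _).
have lam_ij := sum_pair_le lam ij; have lam_j := fano_lam_gt0 j.
have h_ge4 : (4 <= h)%N by have := card_le_sum fano_lam_gt0; rewrite card_ord.
set q := (h.-1 %/ d)%N.
have q_lo : (q * d < h)%N by rewrite -[h]prednK // ltnS leq_divM.
have q_hi : (h <= q.+1 * d)%N by rewrite -[h]prednK // ltn_ceil.
have jump l : (d %| lam l)%N -> (q * lam l %/ h < q.+1 * lam l %/ h)%N.
  by move=> d_dvd; apply: divn_mul_jump (fano_lam_gt0 l) d_dvd _; rewrite q_lo q_hi.
have drop := resid_sum_drop
  (quot_sum_jump2 ij (jump i (dvdn_gcdl _ _)) (jump j (dvdn_gcdr _ _))).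
have q_gt0 : (0 < q)%N by rewrite lt0n; apply: contraTneq q_hi => ->; lia.
have q_le : (q.+1 <= h - 2)%N.
  have : (q * 2 <= q * d)%N by rewrite leq_mul2l d_gt1 orbT.
  lia.
have R_q : (resid_sum lam q <= 2 * h)%N.
  have [q_le1 | q_ge2] := leqP q 1.
    by apply: leq_trans (resid_sum_le_mul _ _) _; rewrite leq_mul2r (leq_trans q_le1) ?orbT.
  by rewrite fano_resid_sum_mid ?q_ge2 //; lia.
have := fano_resid_sum_mid (_ : 2 <= q.+1 <= h - 2)%N; lia.
Qed.

End FanoTetrahedron.

Theorem proposition2p5 (x : 'I_4 -> 'rV[int]_3) (lambda : 'I_4 -> nat) :
  fano x ->
  \big[gcdn/0%N]_(i < 4) lambda i = 1%N ->
  \sum_(i < 4) (lambda i)%:Z *: x i = 0 ->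
  let h := (\sum_(i < 4) lambda i)%N in
  (forall kappa : nat, (2 <= kappa)%N -> (kappa <= h - 2)%N ->
     \sum_(i < 4) fracpart (((kappa * lambda i)%N%:R / h%:R) : rat) = 2) /\
  (forall i j : 'I_4, i != j -> coprime (lambda i) (lambda j)).
Proof.
move=> x_fano lam_gcd1 lam_bary h; split=> [k k_ge2 k_le|].
  2: exact: fano_coprime x_fano lam_gcd1 lam_bary.
have h_gt0 := sum_gt0_biggcd1 lam_gcd1.
rewrite (eq_bigr _ (fun i _ => fracpart_natdiv _ h_gt0)) -mulr_suml -natr_sum.
rewrite -/(resid_sum lambda k) (fano_resid_sum_mid x_fano lam_gcd1 lam_bary) ?k_ge2 //.
by rewrite natrM mulfK // pnatr_eq0 -lt0n.
Qed.
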